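(* Let $\Gamma$ be a gain operator on $\ell^\infty_+(\mathcal I)$ satisfying Assumption A, and suppose that for some $\rho\in\mathcal K_\infty$: (i) the set $\Psi(\Gamma_\rho)$ is cofinal; (ii) $\Gamma_\rho$ satisfies the uniform NJI condition; (iii) there is $M>0$ with $|\mathcal I_i|\le M$ for all $i\in\mathcal I$. Then there exists $\rho'\in\mathcal K_\infty$ such that $\Sigma(\hat\Gamma_{\rho'})$ is UGS and $\Sigma(\Gamma_{\rho'})$ is UGAS, where $\hat\Gamma_{\rho'}(s):=s\oplus\Gamma_{\rho'}(s)$.
   Context: Let $\mathcal I$ be a nonempty countable index set; $\ell^\infty_+(\mathcal I)$ is the cone of nonnegative real families $s=(s_i)_{i\in\mathcal I}$ with $\|s\|:=\sup_i|s_i|<\infty$, ordered componentwise; $\oplus$ is the componentwise maximum. $\mathcal K$: continuous strictly increasing $\gamma:\mathbb R_+\to\mathbb R_+$ with $\gamma(0)=0$; $\mathcal K_\infty$: unbounded elements of $\mathcal K$, acting on $\ell^\infty_+(\mathcal I)$ componentwise; $\mathcal L$: continuous strictly decreasing functions $\mathbb R_+\to\mathbb R_+$ tending to $0$; $\mathcal{KL}$: continuous $\beta$ with $\beta(\cdot,t)\in\mathcal K$ and $\beta(r,\cdot)\in\mathcal L$ for $r>0$. For $\mathcal J\subset\mathcal I$, $s_{|\mathcal J}$ agrees with $s$ on $\mathcal J$ and is $0$ elsewhere. Gain operator: for each $i$ a finite (possibly empty) $\mathcal I_i\subset\mathcal I\setminus\{i\}$; directed graph $\mathcal G$ with vertices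 $\mathcal I$ and edges $ji$, $j\in\mathcal I_i$; a pointwise equicontinuous family $\gamma_{ij}\in\mathcal K_\infty$ ($ji\in E(\mathcal G)$); functions $\mu_i:\ell^\infty_+(\mathcal I)\to[0,\infty]$ with (M1) some $\xi\in\mathcal K_\infty$ has $\mu_i(0)=0$, $\mu_i(s)\ge\xi(\|s\|)$; (M2) $\mu_i$ monotone; (M3) for each finite $\mathcal J$, $\mu_i$ restricted to vectors vanishing off $\mathcal J$ is finite-valued and continuous; (M4) for each norm-bounded $A$ and $\varepsilon>0$ there is $\delta>0$ with $\sup_i|\mu_i(s_{|\mathcal I_i})-\mu_i(s^0_{|\mathcal I_i})|\le\varepsilon$ whenever $s^0\in A$, $\|s-s^0\|\le\delta$. $\Gamma_i(s):=\mu_i([\gamma_{ij}(s_j)]_{j\in\mathcal I_i})$ (argument zero outside $\mathcal I_i$). $\Gamma_\rho:=(\mathrm{id}+\rho)\circ\Gamma$. Assumption A: there is $\eta\in\mathcal K_\infty$ with $\gamma_{ij}\ge\eta$ for all $ji\in E(\mathcal G)$, and $\mathcal I_i\ne\emptyset$ for all $i$. $\mathcal N^-_i(n)$: vertices $j$ with a directed path from $j$ to $i$ of length at most $n$ ($\mathcal N^-_i(0)=\{i\}$). For monotone $T$ with $T(0)=0$: $\Psi(T):=\{s:T(s)\le s\}$; $\Sigma(T)$ is the system $s^{n+1}=T(s^n)$; UGS: $\|T^n(s)\|\le\varphi(\|s\|)$ for some $\varphi\in\mathcal K_\infty$ and all $s,n$; UGAS: $\|T^n(s)\|\le\beta(\|s\|,n)$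 for some $\beta\in\mathcal{KL}$. A set $A$ is cofinal if every $s$ has $\hat s\in A$ with $s\le\hat s$. $T$ satisfies the uniform NJI condition if for all $r,\varepsilon>0$ there are $n\in\mathbb N$, $\delta>0$ such that for all $s$, $i$ with $s_i\ge\varepsilon$, $\|s\|\le r$ there is $j\in\mathcal N^-_i(n)$ with $s_j\ge\delta$ and $T_j(s)<s_j$. *)

From Stdlib Require Import Reals List ClassicalEpsilon.
From Coquelicot Require Import Coquelicot.
Open Scope R_scope.

Section Defs.
Variable I : Type.

Definition vec := I -> R.

Definition lp (s : vec) : Prop :=
  (forall i, 0 <= s i) /\ exists B, forall i, Rabs (s i) <= B.

(* sup-norm, valued in extended reals (finite exactly on bounded vectors) *)
Definition nrm (s : vec) : Rbar := Lub_Rbar (fun x => exists i, x = Rabs (s i)).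

Definition vle (s t : vec) : Prop := forall i, s i <= t i.

Definition vzero : vec := fun _ => 0.

Definition restr (P : I -> Prop) (s : vec) : vec :=
  fun j => if excluded_middle_informative (P j) then s j else 0.

Definition vmax (s t : vec) : vec := fun i => Rmax (s i) (t i).
End Defs.

Arguments lp {I}. Arguments nrm {I}. Arguments vle {I}. Arguments vzero {I}.
Arguments restr {I}. Arguments vmax {I}.

Definition cont_Rp (g : R -> R) : Prop :=
  forall x, 0 <= x -> forall eps, 0 < eps -> exists del, 0 < del /\
    forall y, 0 <= y -> Rabs (y - x) < del -> Rabs (g y - g x) < eps.

Definition classK (g : R -> R) : Prop :=
  cont_Rp g /\ g 0 = 0 /\ (forall x, 0 <= x -> 0 <= g x) /\
  (forall x y, 0 <= x -> x < y -> g x < g y).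

Definition classKinf (g : R -> R) : Prop :=
  classK g /\ forall M, exists x, 0 <= x /\ M < g x.

Definition classL (f : R -> R) : Prop :=
  cont_Rp f /\ (forall x, 0 <= x -> 0 <= f x) /\
  (forall x y, 0 <= x -> x < y -> f y < f x) /\
  (forall eps, 0 < eps -> exists T, forall t, T <= t -> f t < eps).

Definition classKL (b : R -> R -> R) : Prop :=
  (forall r t, 0 <= r -> 0 <= t -> forall eps, 0 < eps -> exists del, 0 < del /\
     forall r' t', 0 <= r' -> 0 <= t' -> Rabs (r' - r) < del -> Rabs (t' - t) < del ->
       Rabs (b r' t' - b r t) < eps) /\
  (forall t, 0 <= t -> classK (fun r => b r t)) /\
  (forall r, 0 < r -> classL (fun t => b r t)).

(* Gain operator data: neighbour lists Ii (finite, duplicate-free, i not in Ii i),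
   gains gam i j = gamma_ij, aggregation functions mu i : vec -> [0,oo] *)
Definition is_gain_data {I : Type} (Ii : I -> list I) (gam : I -> I -> R -> R)
    (mu : I -> vec I -> Rbar) : Prop :=
  (forall i, NoDup (Ii i) /\ ~ In i (Ii i)) /\
  (forall i j, In j (Ii i) -> classKinf (gam i j)) /\
  (forall r, 0 <= r -> forall eps, 0 < eps -> exists del, 0 < del /\
     forall i j, In j (Ii i) -> forall r', 0 <= r' -> Rabs (r' - r) < del ->
       Rabs (gam i j r' - gam i j r) < eps) /\
  (forall i s, lp s -> Rbar_le (Finite 0) (mu i s)) /\
  (exists xi, classKinf xi /\ forall i, mu i vzero = Finite 0 /\
     forall s, lp s -> Rbar_le (Finite (xi (real (nrm s)))) (mu i s)) /\
  (forall i s t, lp s -> lp t -> vle s t -> Rbar_le (mu i s) (mu i t)) /\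
  (forall i (J : list I),
     (forall s, lp s -> (forall j, ~ In j J -> s j = 0) -> is_finite (mu i s)) /\
     (forall s, lp s -> (forall j, ~ In j J -> s j = 0) ->
        forall eps, 0 < eps -> exists del, 0 < del /\
        forall t, lp t -> (forall j, ~ In j J -> t j = 0) ->
          Rbar_le (nrm (fun j => t j - s j)) (Finite del) ->
          Rabs (real (mu i t) - real (mu i s)) < eps)) /\
  (forall A : vec I -> Prop, (exists r, forall s, A s -> lp s /\ Rbar_le (nrm s) (Finite r)) ->
     forall eps, 0 < eps -> exists del, 0 < del /\
     forall s0 s, A s0 -> lp s -> Rbar_le (nrm (fun j => s j - s0 j)) (Finite del) ->
       forall i, Rabs (real (mu i (restr (fun j => In j (Ii i)) s))
                       - real (mu i (restr (fun j => In j (Ii i)) s0))) <= eps).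

Definition Gam {I : Type} (Ii : I -> list I) (gam : I -> I -> R -> R)
    (mu : I -> vec I -> Rbar) (s : vec I) : vec I :=
  fun i => real (mu i (restr (fun j => In j (Ii i)) (fun j => gam i j (s j)))).

Definition Gam_rho {I : Type} (Ii : I -> list I) (gam : I -> I -> R -> R)
    (mu : I -> vec I -> Rbar) (rho : R -> R) (s : vec I) : vec I :=
  fun i => Gam Ii gam mu s i + rho (Gam Ii gam mu s i).

Definition Gam_hat {I : Type} (Ii : I -> list I) (gam : I -> I -> R -> R)
    (mu : I -> vec I -> Rbar) (rho : R -> R) (s : vec I) : vec I :=
  vmax s (Gam_rho Ii gam mu rho s).

Definition assumptionA {I : Type} (Ii : I -> list I) (gam : I -> I -> R -> R) : Prop :=
  (exists eta, classKinf eta /\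
     forall i j, In j (Ii i) -> forall r, 0 <= r -> eta r <= gam i j r) /\
  (forall i, Ii i <> nil).

(* directed path j -> ... -> i of length exactly n in the graph with edges ji, j in I_i *)
Inductive dpath {I : Type} (Ii : I -> list I) : nat -> I -> I -> Prop :=
  | dpath0 : forall i, dpath Ii 0 i i
  | dpathS : forall n j k i, In j (Ii k) -> dpath Ii n k i -> dpath Ii (S n) j i.

Definition Nminus {I : Type} (Ii : I -> list I) (i : I) (n : nat) (j : I) : Prop :=
  exists m, (m <= n)%nat /\ dpath Ii m j i.

Definition Psi {I : Type} (T : vec I -> vec I) (s : vec I) : Prop :=
  lp s /\ vle (T s) s.

Definition cofinal {I : Type} (A : vec I -> Prop) : Prop :=
  forall s, lp s -> exists sh, A sh /\ vle s sh.

Definition uniform_NJI {I : Type} (Ii : I -> list I) (T : vec I -> vec I) : Prop :=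
  forall r eps, 0 < r -> 0 < eps -> exists (n : nat) (del : R), 0 < del /\
    forall s i, lp s -> eps <= s i -> Rbar_le (nrm s) (Finite r) ->
      exists j, Nminus Ii i n j /\ del <= s j /\ T s j < s j.

Fixpoint iter {X : Type} (n : nat) (f : X -> X) (x : X) : X :=
  match n with O => x | S n => f (iter n f x) end.

Definition UGS {I : Type} (T : vec I -> vec I) : Prop :=
  exists phi, classKinf phi /\ forall s n, lp s ->
    Rbar_le (nrm (iter n T s)) (Finite (phi (real (nrm s)))).

Definition UGAS {I : Type} (T : vec I -> vec I) : Prop :=
  exists beta, classKL beta /\ forall s n, lp s ->
    Rbar_le (nrm (iter n T s)) (Finite (beta (real (nrm s)) (INR n))).

(* Halving the margin: a point of Psi(Gamma_rho) also lies in Psi(Gamma_{rho/2}) and in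
   Psi(hat Gamma_{rho/2}), and an orbit of a monotone operator started below a point of Psi
   stays below it, so cofinality bounds every orbit.  Along the orbit of a point w of Psi, as
   long as s_i >= eps the NJI condition supplies a vertex j of the upstream neighbourhood
   N^-_i(n) with Gamma_rho(s)_j < s_j, and the unused half of the margin turns this into a
   drop of s_j by a fixed amount.  That neighbourhood has at most (1+M)^n vertices, so the sum
   of s over it is a potential forcing s_i < eps after a number of steps depending only on
   ||w||, eps.  Assumption A keeps Gamma_{rho/2} from collapsing positive vectors, so Psi
   contains arbitrarily small points bounded away from 0, which gives stability at 0.  The
   resulting uniform bounds are turned into K_infty and KL estimates by interpolating
   monotone majorants on a logarithmic grid; a weight (phi(r)+1) e^r makes the convergence
   uniform in the radius. *)

From Stdlib Require Import Reals List Lra Lia Classical ClassicalEpsilon.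
From Coquelicot Require Import Coquelicot.
Open Scope R_scope.

(** * Comparison functions *)

Lemma classK_le (g : R -> R) : classK g -> forall x y, 0 <= x -> x <= y -> g x <= g y.
Proof.
  intros (_ & _ & _ & Hg) x y hx hxy.
  destruct (Req_dec x y) as [<-|ne]; [lra|]. left; apply Hg; lra.
Qed.

Lemma classK_nonneg (g : R -> R) : classK g -> forall x, 0 <= x -> 0 <= g x.
Proof. intros (_ & _ & Hg & _); exact Hg. Qed.

Lemma classK_pos (g : R -> R) : classK g -> forall x, 0 < x -> 0 < g x.
Proof. intros (_ & g0 & _ & Hg) x hx. rewrite <- g0. apply Hg; lra. Qed.

Lemma classK_comp (f g : R -> R) : classK f -> classK g -> classK (fun x => f (g x)).
Proof.
  intros Kf Kg. pose proof Kf as (cf & f0 & _ & sf). pose proof Kg as (cg & g0 & _ & sg).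
  split; [|split; [|split]].
  - intros x hx eps he.
    destruct (cf (g x) (classK_nonneg g Kg x hx) eps he) as (d1 & hd1 & H1).
    destruct (cg x hx d1 hd1) as (d2 & hd2 & H2).
    exists d2; split; [exact hd2|]. intros y hy hxy.
    apply H1; [apply (classK_nonneg g Kg y hy)|]. apply H2; assumption.
  - rewrite g0; exact f0.
  - intros x hx. apply (classK_nonneg f Kf), (classK_nonneg g Kg), hx.
  - intros x y hx hxy. apply sf; [apply (classK_nonneg g Kg x hx)|]. apply sg; assumption.
Qed.

Lemma classKinf_div (c : R) (g : R -> R) : 0 < c -> classKinf g -> classKinf (fun x => g x / c).
Proof.
  intros hc ((cg & g0 & ng & sg) & ug). split; [split; [|split; [|split]]|].
  - intros x hx eps he. destruct (cg x hx (eps * c)) as (d & hd & H); [nra|].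
    exists d; split; [exact hd|]. intros y hy hxy.
    replace (g y / c - g x / c) with ((g y - g x) / c) by (field; lra).
    rewrite Rabs_div, (Rabs_right c) by lra.
    apply Rmult_lt_reg_r with c; [exact hc|]. field_simplify; [|lra].
    rewrite Rmult_comm. apply H; assumption.
  - rewrite g0; field; lra.
  - intros x hx. apply Rdiv_le_0_compat; [apply ng, hx|exact hc].
  - intros x y hx hxy. apply Rmult_lt_compat_r; [apply Rinv_0_lt_compat, hc|apply sg; assumption].
  - intros M. destruct (ug (M * c)) as (x & hx & hM). exists x; split; [exact hx|].
    apply Rmult_lt_reg_r with c; [exact hc|]. field_simplify; lra.
Qed.

Lemma cont_Rp_of_continuity_pt (f : R -> R) :
  (forall x, 0 <= x -> continuity_pt f x) -> cont_Rp f.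
Proof.
  intros Hf x hx eps he. destruct (Hf x hx eps he) as (d & hd & H).
  exists d; split; [exact hd|]. intros y _ hy.
  destruct (Req_dec y x) as [->|ne].
  - rewrite Rminus_diag, Rabs_R0; exact he.
  - apply (H y). split; [split; [exact I|congruence]|exact hy].
Qed.

Lemma continuity_2d_pt_fst (f : R -> R) x y :
  continuity_pt f x -> continuity_2d_pt (fun u _ => f u) x y.
Proof.
  intros Hf. apply (continuity_1d_2d_pt_comp f (fun u _ => u)); [exact Hf|].
  apply continuity_2d_pt_id1.
Qed.

Lemma continuity_2d_pt_snd (f : R -> R) x y :
  continuity_pt f y -> continuity_2d_pt (fun _ v => f v) x y.
Proof.
  intros Hf. apply (continuity_1d_2d_pt_comp f (fun _ v => v)); [exact Hf|].
  apply continuity_2d_pt_id2.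
Qed.

Lemma classL_pos (l : R -> R) : classL l -> forall t, 0 <= t -> 0 < l t.
Proof.
  intros (_ & nl & sl & _) t ht.
  pose proof (nl (t + 1) ltac:(lra)). pose proof (sl t (t + 1) ht ltac:(lra)). lra.
Qed.

Lemma classKL_mul (k l : R -> R) :
  classK k -> (forall r, 0 <= r -> continuity_pt k r) ->
  classL l -> (forall t, 0 <= t -> continuity_pt l t) ->
  classKL (fun r t => k r * l t).
Proof.
  intros Kk ck Ll cl. split; [|split].
  - intros r t hr ht eps he.
    assert (H2 : continuity_2d_pt (fun u v => k u * l v) r t).
    { apply continuity_2d_pt_mult.
      - apply continuity_2d_pt_fst, ck, hr.
      - apply continuity_2d_pt_snd, cl, ht. }
    destruct (H2 (mkposreal eps he)) as [d Hd].
    exists d; split; [apply cond_pos|]. intros r' t' _ _. apply Hd.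
  - intros t ht. pose proof (classL_pos l Ll t ht) as hl.
    split; [|split; [|split]].
    + apply cont_Rp_of_continuity_pt. intros x hx.
      apply continuity_pt_mult; [apply ck, hx|apply continuity_pt_const; easy].
    + destruct Kk as (_ & -> & _). ring.
    + intros x hx. pose proof (classK_nonneg k Kk x hx). nra.
    + intros x y hx hxy. destruct Kk as (_ & _ & _ & sk). specialize (sk x y hx hxy). nra.
  - intros r hr. pose proof (classK_pos k Kk r hr) as hk.
    destruct Ll as (_ & nl & sl & zl). split; [|split; [|split]].
    + apply cont_Rp_of_continuity_pt. intros t ht.
      apply continuity_pt_mult; [apply continuity_pt_const; easy|apply cl, ht].
    + intros t ht. specialize (nl t ht). nra.
    + intros x y hx hxy. specialize (sl x y hx hxy). nra.
    + intros eps he. destruct (zl (eps / k r)) as (T & HT).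
      { apply Rdiv_lt_0_compat; lra. }
      exists T. intros t hT. specialize (HT t hT).
      apply (Rmult_lt_compat_l (k r)) in HT; [|exact hk].
      unfold Rdiv in HT. rewrite <- Rmult_assoc, Rinv_r_simpl_m in HT by lra. exact HT.
Qed.

(* Split at a small [c]: for [g < c], continuity of [rho] at [0] keeps [g + rho g / 2] below
   [del / 2]; for [g >= c], half of [rho g] is at least [rho c / 2]. *)
Lemma classK_half_gap (rho : R -> R) (del : R) : classK rho -> 0 < del ->
  exists gap, 0 < gap /\
    forall g x, 0 <= g -> del <= x -> g + rho g < x -> g + rho g / 2 <= x - gap.
Proof.
  intros Krho hdel. pose proof Krho as (crho & rho0 & _).
  destruct (crho 0 (Rle_refl 0) (del / 2)) as (d & hd & Hd); [lra|].
  pose proof (Rmin_l (d / 2) (del / 4)). pose proof (Rmin_r (d / 2) (del / 4)).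
  set (c := Rmin (d / 2) (del / 4)) in *.
  assert (hc : 0 < c) by (apply Rmin_pos; lra).
  assert (hrc : rho c < del / 2).
  { assert (hc0 : Rabs (c - 0) < d) by (rewrite Rminus_0_r, Rabs_right; lra).
    specialize (Hd c (Rlt_le _ _ hc) hc0). rewrite rho0, Rminus_0_r in Hd.
    pose proof (Rle_abs (rho c)). lra. }
  pose proof (classK_pos rho Krho c hc).
  exists (Rmin (rho c / 2) (del / 2)). split; [apply Rmin_pos; lra|].
  pose proof (Rmin_l (rho c / 2) (del / 2)). pose proof (Rmin_r (rho c / 2) (del / 2)).
  intros g x hg hx hgx. destruct (Rle_dec c g) as [h|h].
  - pose proof (classK_le rho Krho c g (Rlt_le _ _ hc) h). lra.
  - pose proof (classK_le rho Krho g c hg (Rlt_le _ _ (Rnot_le_lt _ _ h))). lra.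
Qed.

Lemma exp_le x y : x <= y -> exp x <= exp y.
Proof. intros h. destruct (Req_dec x y) as [->|ne]; [lra|]. left; apply exp_increasing; lra. Qed.

Definition decay_weight (phi : R -> R) (r : R) : R := (phi r + 1) * exp r.

Lemma decay_weight_ge (phi : R -> R) r : 0 <= r -> 0 <= phi r -> phi r + 1 <= decay_weight phi r.
Proof.
  intros hr hp. unfold decay_weight. pose proof (exp_le 0 r hr) as h1. rewrite exp_0 in h1. nra.
Qed.

Lemma sqrt_weighted_classK (phi : R -> R) :
  classK phi -> (forall r, continuity_pt phi r) -> (forall r, 0 <= phi r) ->
  classK (fun r => sqrt (phi r * decay_weight phi r)) /\
  forall r, continuity_pt (fun r => sqrt (phi r * decay_weight phi r)) r.
Proof.
  intros Kphi cphi nphi.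
  assert (W_pos : forall r, 0 < decay_weight phi r).
  { intros r. unfold decay_weight. pose proof (nphi r). pose proof (exp_pos r). nra. }
  assert (cont : forall r, continuity_pt (fun r => sqrt (phi r * decay_weight phi r)) r).
  { intros r. apply (continuity_pt_comp (fun r => phi r * decay_weight phi r) sqrt).
    - apply continuity_pt_mult; [apply cphi|]. unfold decay_weight.
      apply continuity_pt_mult.
      + apply continuity_pt_plus; [apply cphi|apply continuity_pt_const; easy].
      + apply derivable_continuous_pt, derivable_pt_exp.
    - apply continuity_pt_sqrt. pose proof (nphi r). pose proof (W_pos r). nra. }
  split; [|exact cont]. split; [|split; [|split]].
  - apply cont_Rp_of_continuity_pt. intros r _; apply cont.
  - destruct Kphi as (_ & -> & _). rewrite Rmult_0_l. apply sqrt_0.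
  - intros r _. apply sqrt_pos.
  - intros x y hx hxy. apply sqrt_lt_1_alt.
    pose proof (nphi x). pose proof (W_pos x). destruct Kphi as (_ & _ & _ & sphi).
    pose proof (sphi x y hx hxy).
    assert (decay_weight phi x <= decay_weight phi y).
    { unfold decay_weight. pose proof (exp_le x y ltac:(lra)). pose proof (exp_pos x). nra. }
    split; nra.
Qed.

Lemma sqrt_reflect_classL (G : R -> R) :
  (forall x, continuity_pt G x) -> (forall x y, x < y -> G x < G y) -> (forall x, 0 < G x) ->
  (forall eps, 0 < eps -> exists X, forall y, y <= X -> G y <= eps) ->
  classL (fun t => sqrt (G (- t))) /\ forall t, continuity_pt (fun t => sqrt (G (- t))) t.
Proof.
  intros Gc Gs Gp Gz.
  assert (cont : forall t, continuity_pt (fun t => sqrt (G (- t))) t).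
  { intros t. apply (continuity_pt_comp (fun t => G (- t)) sqrt).
    - apply (continuity_pt_comp Ropp G); [|apply Gc].
      apply continuity_pt_opp, derivable_continuous_pt, derivable_pt_id.
    - apply continuity_pt_sqrt. left; apply Gp. }
  split; [|exact cont]. split; [|split; [|split]].
  - apply cont_Rp_of_continuity_pt. intros t _; apply cont.
  - intros t _. apply sqrt_pos.
  - intros x y _ hxy. apply sqrt_lt_1_alt. split; [left; apply Gp|]. apply Gs; lra.
  - intros eps he. pose proof (Rmult_lt_0_compat eps eps he he).
    destruct (Gz (eps * eps / 2)) as [X HX]; [lra|].
    exists (- X). intros t ht. rewrite <- (sqrt_square eps) by lra.
    apply sqrt_lt_1_alt. split; [left; apply Gp|]. specialize (HX (- t) ltac:(lra)).
    lra.
Qed.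

Lemma le_sqrt_mul x a b c :
  0 <= x -> 0 <= b -> 0 <= c -> x <= a -> x <= b * c -> x <= sqrt (a * c) * sqrt b.
Proof.
  intros hx hb hc ha hbc. assert (0 <= a) by lra.
  rewrite <- sqrt_mult by nra. rewrite <- (sqrt_square x) by exact hx.
  apply sqrt_le_1_alt. rewrite Rmult_assoc. apply Rmult_le_compat; nra.
Qed.

(** * Continuous majorants *)

Section Interpolation.
Variable c : Z -> R.
Hypothesis c_lt : forall k k', (k < k')%Z -> c k < c k'.

Definition interp (x : R) : R :=
  c (Zfloor x) + (x - IZR (Zfloor x)) * (c (Zfloor x + 1) - c (Zfloor x)).

Lemma node_le k k' : (k <= k')%Z -> c k <= c k'.
Proof. intros h. destruct (Z.eq_dec k k') as [<-|ne]; [lra|]. left; apply c_lt; lia. Qed.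

Lemma interp_bounds x : c (Zfloor x) <= interp x < c (Zfloor x + 1).
Proof.
  unfold interp. pose proof (Zfloor_bound x) as [h1 h2].
  pose proof (c_lt (Zfloor x) (Zfloor x + 1) ltac:(lia)) as hc.
  set (d := c (Zfloor x + 1) - c (Zfloor x)). assert (0 < d) by (unfold d; lra).
  split; [|unfold d in *]; nra.
Qed.

Lemma interp_lt x y : x < y -> interp x < interp y.
Proof.
  intros h. destruct (Z.eq_dec (Zfloor x) (Zfloor y)) as [e|ne].
  - unfold interp. rewrite e. pose proof (c_lt (Zfloor y) (Zfloor y + 1) ltac:(lia)). nra.
  - pose proof (Zfloor_le x y ltac:(lra)).
    pose proof (interp_bounds x). pose proof (interp_bounds y).
    pose proof (node_le (Zfloor x + 1) (Zfloor y) ltac:(lia)). lra.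
Qed.

Lemma Zfloor_le_succ x y : x <= y <= x + 1 -> (Zfloor y <= Zfloor x + 1)%Z.
Proof.
  intros h. rewrite <- (Zfloor_addz 1 x). apply Zfloor_le. simpl; lra.
Qed.

(* On a unit interval, [interp] crosses at most two linear pieces. *)
Lemma interp_lipschitz_r x y : x <= y <= x + 1 ->
  interp y - interp x <= (y - x) * (c (Zfloor x + 2) - c (Zfloor x)).
Proof.
  intros hxy. pose proof (Zfloor_bound x) as [a1 a2]. pose proof (Zfloor_bound y) as [b1 b2].
  pose proof (Zfloor_le x y (proj1 hxy)). pose proof (Zfloor_le_succ x y hxy).
  set (m := Zfloor x) in *.
  pose proof (c_lt m (m + 1) ltac:(lia)). pose proof (c_lt (m + 1) (m + 2) ltac:(lia)).
  unfold interp. fold m.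
  destruct (Z.eq_dec (Zfloor y) m) as [->|ne]; [nra|].
  replace (Zfloor y) with (m + 1)%Z in * by lia.
  replace (m + 1 + 1)%Z with (m + 2)%Z by ring.
  rewrite plus_IZR in *. simpl in *. nra.
Qed.

Lemma interp_le x y : x <= y -> interp x <= interp y.
Proof. intros h. destruct (Req_dec x y) as [->|ne]; [lra|]. left; apply interp_lt; lra. Qed.

Lemma interp_lipschitz x y : Rabs (y - x) <= 1 ->
  Rabs (interp y - interp x) <= Rabs (y - x) * (c (Zfloor x + 2) - c (Zfloor x - 1)).
Proof.
  intros hxy. destruct (Rle_dec x y) as [h|h].
  - rewrite (Rabs_right (y - x)) in * by lra.
    pose proof (interp_le x y h). pose proof (interp_lipschitz_r x y ltac:(lra)).
    pose proof (node_le (Zfloor x - 1) (Zfloor x) ltac:(lia)).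
    rewrite Rabs_right by lra. nra.
  - rewrite (Rabs_left (y - x)) in * by lra.
    pose proof (interp_le y x ltac:(lra)). pose proof (interp_lipschitz_r y x ltac:(lra)).
    pose proof (Zfloor_le y x ltac:(lra)). pose proof (Zfloor_le_succ y x ltac:(lra)).
    pose proof (node_le (Zfloor x - 1) (Zfloor y) ltac:(lia)).
    pose proof (node_le (Zfloor y + 2) (Zfloor x + 2) ltac:(lia)).
    rewrite Rabs_left1 by lra. nra.
Qed.

Lemma interp_continuous x : continuity_pt interp x.
Proof.
  set (L := c (Zfloor x + 2) - c (Zfloor x - 1)).
  assert (hL : 0 < L) by (apply Rlt_0_minus, c_lt; lia).
  intros eps he. exists (Rmin 1 (eps / (L + 1))). split.
  { apply Rmin_pos; [lra|apply Rdiv_lt_0_compat; lra]. }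
  intros y [_ hy]. simpl in *. unfold R_dist in *.
  pose proof (Rmin_l 1 (eps / (L + 1))). pose proof (Rmin_r 1 (eps / (L + 1))).
  pose proof (interp_lipschitz x y ltac:(lra)) as lip. fold L in lip.
  assert (Rabs (y - x) * (L + 1) < eps).
  { assert (hy' : Rabs (y - x) < eps / (L + 1)) by lra.
    apply (Rmult_lt_compat_r (L + 1)) in hy'; [|lra].
    replace (eps / (L + 1) * (L + 1)) with eps in hy' by (field; lra). exact hy'. }
  pose proof (Rabs_pos (y - x)). nra.
Qed.

End Interpolation.

Lemma increasing_majorant (w : R -> R) :
  (forall x y, x <= y -> w x <= w y) -> (forall x, 0 <= w x) ->
  (forall eps, 0 < eps -> exists X, w X <= eps) ->
  exists G : R -> R, (forall x, continuity_pt G x) /\ (forall x y, x < y -> G x < G y) /\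
    (forall x, w x < G x) /\ (forall eps, 0 < eps -> exists X, forall y, y <= X -> G y <= eps).
Proof.
  intros w_le w_nonneg w_small.
  (* [exp] makes the nodes strictly increasing; the shift [+ 1] lets [G] dominate [w] on
     the whole cell [[k, k + 1]]. *)
  set (c k := w (IZR k + 1) + exp (IZR k)).
  assert (c_lt : forall k k', (k < k')%Z -> c k < c k').
  { intros k k' h. apply IZR_lt in h. unfold c.
    pose proof (w_le (IZR k + 1) (IZR k' + 1) ltac:(lra)). pose proof (exp_increasing _ _ h). lra. }
  exists (interp c). split; [|split; [|split]].
  - apply interp_continuous, c_lt.
  - apply interp_lt, c_lt.
  - intros x. pose proof (interp_bounds c c_lt x) as [h _]. pose proof (Zfloor_bound x).
    pose proof (w_le x (IZR (Zfloor x) + 1) ltac:(lra)). pose proof (exp_pos (IZR (Zfloor x))).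
    unfold c at 1 in h. lra.
  - intros eps he. destruct (w_small (eps / 2) ltac:(lra)) as [X HX].
    exists (Rmin (X - 2) (ln (eps / 2) - 1)). intros y hy.
    pose proof (Rmin_l (X - 2) (ln (eps / 2) - 1)). pose proof (Rmin_r (X - 2) (ln (eps / 2) - 1)).
    pose proof (interp_bounds c c_lt y) as [_ h]. pose proof (Zfloor_bound y).
    change (c (Zfloor y + 1)%Z) with (w (IZR (Zfloor y + 1) + 1) + exp (IZR (Zfloor y + 1))) in h.
    rewrite plus_IZR in h.
    pose proof (w_le (IZR (Zfloor y) + 1 + 1) X ltac:(lra)).
    assert (exp (IZR (Zfloor y) + 1) <= eps / 2).
    { rewrite <- (exp_ln (eps / 2)) by lra. apply exp_le; lra. }
    lra.
Qed.

Section LeastBound.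
Variable Q : R -> R -> Prop.
Hypothesis Q_up : forall x b b', Q x b -> b <= b' -> Q x b'.
Hypothesis Q_down : forall x y b, Q x b -> y <= x -> Q y b.
Hypothesis Q_nonneg : forall x b, Q x b -> 0 <= b.
Hypothesis Q_bounded : forall x, exists b, Q x b.
Hypothesis Q_small : forall eps, 0 < eps -> exists x, Q x eps.

Definition least_bound (x : R) : R := real (Glb_Rbar (Q x)).

Lemma least_bound_spec x :
  0 <= least_bound x /\ (forall b, Q x b -> least_bound x <= b) /\
  (forall b, least_bound x < b -> Q x b).
Proof.
  unfold least_bound. destruct (Glb_Rbar_correct (Q x)) as [Hlb Hglb].
  destruct (Q_bounded x) as [B HB].
  assert (L0 : Rbar_le 0 (Glb_Rbar (Q x))) by (apply Hglb; intros b hb; apply (Q_nonneg x b hb)).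
  pose proof (Hlb B HB) as LB.
  destruct (Glb_Rbar (Q x)) as [g| |]; simpl in *; try contradiction.
  split; [exact L0|split; [intros b hb; apply (Hlb b hb)|]].
  intros b hb. apply NNPP. intros Hn.
  assert (Rbar_le b g) as Hbg.
  { apply Hglb. intros b' hb'. simpl. destruct (Rle_dec b b') as [|n]; [assumption|].
    exfalso; apply Hn, (Q_up x b'); [exact hb'|lra]. }
  simpl in Hbg. lra.
Qed.

Lemma least_bound_le x y : x <= y -> least_bound x <= least_bound y.
Proof.
  intros h. apply Rle_plus_epsilon. intros e he.
  destruct (least_bound_spec y) as (_ & _ & Hy). destruct (least_bound_spec x) as (_ & Hx & _).
  apply Hx, (Q_down y); [apply Hy; lra|exact h].
Qed.

Lemma least_bound_small eps : 0 < eps -> exists X, least_bound X <= eps.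
Proof.
  intros he. destruct (Q_small eps he) as [X HX]. exists X. apply (least_bound_spec X), HX.
Qed.

(* [least_bound] itself need not satisfy [Q]; a strict majorant does. *)
Lemma increasing_majorant_of_bounds :
  exists G : R -> R, (forall x, continuity_pt G x) /\ (forall x y, x < y -> G x < G y) /\
    (forall x, 0 < G x) /\ (forall eps, 0 < eps -> exists X, forall y, y <= X -> G y <= eps) /\
    (forall x, Q x (G x)).
Proof.
  destruct (increasing_majorant least_bound least_bound_le (fun x => proj1 (least_bound_spec x))
              least_bound_small) as (G & Gc & Gs & Gw & Gz).
  exists G. split; [exact Gc|split; [exact Gs|split; [|split; [exact Gz|]]]].
  - intros x. pose proof (proj1 (least_bound_spec x)). specialize (Gw x). lra.
  - intros x. apply (least_bound_spec x), Gw.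
Qed.

End LeastBound.

(* [G] lives on the logarithmic scale; the extra [+ r] makes the result unbounded. *)
Definition log_compose (G : R -> R) (r : R) : R := if Rle_dec r 0 then 0 else G (ln r) + r.

Section LogCompose.
Variable G : R -> R.
Hypothesis G_cont : forall x, continuity_pt G x.
Hypothesis G_lt : forall x y, x < y -> G x < G y.
Hypothesis G_pos : forall x, 0 < G x.
Hypothesis G_small : forall eps, 0 < eps -> exists X, forall y, y <= X -> G y <= eps.

Lemma log_compose_nonneg r : 0 <= log_compose G r.
Proof. unfold log_compose. destruct (Rle_dec r 0); [lra|]. pose proof (G_pos (ln r)). lra. Qed.

Lemma log_compose_continuous r : continuity_pt (log_compose G) r.
Proof.
  destruct (Rtotal_order r 0) as [h|[->|h]].
  - apply (continuity_pt_locally_ext (fun _ => 0) _ (- r)); [lra| |apply continuity_pt_const; easy].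
    intros y hy. unfold Rdist in hy. pose proof (Rle_abs (y - r)).
    unfold log_compose. destruct (Rle_dec y 0); [reflexivity|lra].
  - intros eps he. destruct (G_small (eps / 2) ltac:(lra)) as [X HX].
    exists (Rmin (exp X) (eps / 2)). split; [apply Rmin_pos; [apply exp_pos|lra]|].
    intros y [_ hy]. simpl in *. unfold R_dist in *. rewrite Rminus_0_r in hy.
    pose proof (Rmin_l (exp X) (eps / 2)). pose proof (Rmin_r (exp X) (eps / 2)).
    unfold log_compose. destruct (Rle_dec 0 0) as [_|]; [|lra].
    destruct (Rle_dec y 0); [rewrite Rminus_0_r, Rabs_R0; lra|].
    rewrite Rabs_right in hy by lra.
    assert (ln y < X) by (rewrite <- (ln_exp X); apply ln_increasing; lra).
    specialize (HX (ln y) ltac:(lra)). pose proof (G_pos (ln y)).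
    rewrite Rminus_0_r, Rabs_right by lra. lra.
  - apply (continuity_pt_locally_ext (fun y => G (ln y) + y) _ r); [lra| |].
    + intros y hy. unfold Rdist in hy. rewrite Rabs_minus_sym in hy. pose proof (Rle_abs (r - y)).
      unfold log_compose. destruct (Rle_dec y 0); [lra|reflexivity].
    + apply continuity_pt_plus; [|apply derivable_continuous_pt, derivable_pt_id].
      apply (continuity_pt_comp ln G); [|apply G_cont].
      apply derivable_continuous_pt. exists (/ r). apply derivable_pt_lim_ln, h.
Qed.

Lemma log_compose_classKinf : classKinf (log_compose G).
Proof.
  split; [split; [|split; [|split]]|].
  - apply cont_Rp_of_continuity_pt. intros r _; apply log_compose_continuous.
  - unfold log_compose. destruct (Rle_dec 0 0); [reflexivity|lra].
  - intros r _; apply log_compose_nonneg.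
  - intros x y hx hxy. unfold log_compose.
    destruct (Rle_dec y 0); [lra|]. destruct (Rle_dec x 0).
    + pose proof (G_pos (ln y)). lra.
    + pose proof (G_lt (ln x) (ln y) (ln_increasing x y ltac:(lra) hxy)). lra.
  - intros M. exists (Rabs M + 1). pose proof (Rabs_pos M). pose proof (Rle_abs M).
    split; [lra|]. unfold log_compose. destruct (Rle_dec (Rabs M + 1) 0); [lra|].
    pose proof (G_pos (ln (Rabs M + 1))). lra.
Qed.

End LogCompose.

Lemma classKinf_majorant (P : R -> R -> Prop) :
  (forall r r' b b', P r b -> r' <= r -> b <= b' -> P r' b') ->
  (forall r b, (forall e, 0 < e -> P r (b + e)) -> P r b) ->
  (forall r b, P r b -> 0 <= b) ->
  (forall r, exists b, P r b) ->
  (forall eps, 0 < eps -> exists r, 0 < r /\ P r eps) ->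
  exists phi, classKinf phi /\ (forall r, continuity_pt phi r) /\ (forall r, 0 <= phi r) /\
    forall r, 0 <= r -> P r (phi r).
Proof.
  intros P_mono P_closed P_nonneg P_bounded P_small.
  destruct (increasing_majorant_of_bounds (fun x b => P (exp x) b)) as (G & Gc & Gs & Gp & Gz & GP).
  - intros x b b' hb h. apply (P_mono (exp x) (exp x) b b' hb); lra.
  - intros x y b hb h. apply (P_mono (exp x) (exp y) b b hb); [apply exp_le, h|lra].
  - intros x b; apply P_nonneg.
  - intros x; apply P_bounded.
  - intros eps he. destruct (P_small eps he) as (r & hr & Hr).
    exists (ln r). rewrite exp_ln; assumption.
  - exists (log_compose G). split; [apply log_compose_classKinf; assumption|].
    split; [apply log_compose_continuous; assumption|split; [apply log_compose_nonneg, Gp|]].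
    intros r hr. unfold log_compose. destruct (Rle_dec r 0) as [h|h].
    + replace r with 0 by lra. apply P_closed. intros e he. rewrite Rplus_0_l.
      destruct (Gz e he) as [X HX].
      apply (P_mono (exp X) 0 (G X) e (GP X)); [left; apply exp_pos|apply HX; lra].
    + apply (P_mono r r (G (ln r))); [|lra|lra]. rewrite <- (exp_ln r) at 1 by lra. apply GP.
Qed.

(** * Vectors *)

Section Vectors.
Variable I : Type.
Implicit Types s t w : vec I.

Lemma vle_refl s : vle s s.
Proof. intros i; lra. Qed.

Lemma vle_trans s t w : vle s t -> vle t w -> vle s w.
Proof. intros h1 h2 i. specialize (h1 i). specialize (h2 i). lra. Qed.

Lemma nrm_le s b : (forall i, Rabs (s i) <= b) -> Rbar_le (nrm s) b.
Proof.
  intros hb. apply (Lub_Rbar_correct (fun x => exists i, x = Rabs (s i))).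
  intros x [i ->]. apply hb.
Qed.

Lemma Rabs_le_nrm s i : Rbar_le (Rabs (s i)) (nrm s).
Proof. apply (Lub_Rbar_correct (fun x => exists i, x = Rabs (s i))). exists i; reflexivity. Qed.

Lemma lp_le_nrm s i : lp s -> s i <= real (nrm s).
Proof.
  intros [_ [B HB]]. pose proof (nrm_le s B HB). pose proof (Rabs_le_nrm s i).
  pose proof (Rle_abs (s i)). destruct (nrm s); simpl in *; [lra|contradiction|contradiction].
Qed.

(* For empty [I] the norm is [m_infty], whose [real] part is [0]. *)
Lemma nrm_nonneg s : 0 <= real (nrm s).
Proof.
  destruct (nrm s) as [x| |] eqn:E; simpl; [|lra|lra].
  destruct (Rle_dec 0 x) as [|hx]; [assumption|exfalso].
  assert (Hnone : forall i : I, False).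
  { intros i. pose proof (Rabs_le_nrm s i) as h. rewrite E in h. simpl in h.
    pose proof (Rabs_pos (s i)). lra. }
  pose proof (nrm_le s (x - 1) (fun i => False_ind _ (Hnone i))) as h.
  rewrite E in h. simpl in h. lra.
Qed.

Lemma lp_le s w : vle vzero s -> vle s w -> lp w -> lp s.
Proof.
  intros hs hsw [_ [B HB]]. split; [exact hs|]. exists B. intros i.
  specialize (hs i). specialize (hsw i). specialize (HB i). unfold vzero in hs.
  rewrite Rabs_right in * by lra. lra.
Qed.

Lemma lp_cst c : 0 <= c -> lp (fun _ : I => c).
Proof. intros h. split; [intros i; exact h|]. exists c. intros i. rewrite Rabs_right; lra. Qed.

Lemma le_cst_of_nrm s r : lp s -> real (nrm s) <= r -> vle s (fun _ => r).
Proof. intros hs h i. pose proof (lp_le_nrm s i hs). lra. Qed.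

End Vectors.

Fixpoint sum_list {I : Type} (L : list I) (v : vec I) : R :=
  match L with nil => 0 | j :: L => v j + sum_list L v end.

Section SumList.
Variable I : Type.
Implicit Types (L : list I) (v : vec I).

Lemma sum_list_nonneg L v : vle vzero v -> 0 <= sum_list L v.
Proof.
  intros hv. induction L as [|j L IH]; simpl; [lra|]. specialize (hv j). unfold vzero in hv. lra.
Qed.

Lemma le_sum_list L v j : vle vzero v -> In j L -> v j <= sum_list L v.
Proof.
  intros hv hj. induction L as [|k L IH]; [contradiction|]. simpl.
  pose proof (sum_list_nonneg L v hv). specialize (hv k). unfold vzero in hv.
  destruct hj as [->|hj]; [lra|]. specialize (IH hj). lra.
Qed.

Lemma sum_list_le_length L v B : (forall j, v j <= B) -> sum_list L v <= INR (length L) * B.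
Proof.
  intros hB. induction L as [|j L IH]; cbn [sum_list length]; [simpl; lra|].
  rewrite S_INR. specialize (hB j). lra.
Qed.

Lemma sum_list_drop L v v' j gap : vle v' v -> In j L -> v' j <= v j - gap ->
  sum_list L v' <= sum_list L v - gap.
Proof.
  intros hle hj hgap. induction L as [|k L IH]; [contradiction|]. simpl.
  assert (sum_list L v' <= sum_list L v).
  { clear IH hj. induction L as [|l L IHL]; simpl; [lra|]. specialize (hle l). lra. }
  destruct hj as [->|hj]; [lra|]. specialize (IH hj). specialize (hle k). lra.
Qed.

Lemma sum_list_potential (u : nat -> vec I) L i B eps gap N :
  (forall n, vle vzero (u n)) -> (forall n, vle (u (S n)) (u n)) -> (forall j, u 0%nat j <= B) ->
  (forall n, eps <= u n i -> exists j, In j L /\ u (S n) j <= u n j - gap) ->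
  INR (length L) * B < INR N * gap -> u N i < eps.
Proof.
  intros hnn hdec hB Hdrop hN. apply Rnot_le_lt. intros hNi.
  assert (hmono : forall n, (n <= N)%nat -> eps <= u n i).
  { intros n hn. enough (u N i <= u n i) by lra.
    clear hN hNi. induction hn as [|m hm IH]; [lra|]. specialize (hdec m i). lra. }
  assert (Hsum : forall n, (n <= N)%nat -> sum_list L (u n) <= sum_list L (u 0%nat) - INR n * gap).
  { induction n as [|n IH]; intros hn; [simpl; lra|].
    destruct (Hdrop n (hmono n ltac:(lia))) as (j & hj & hdrop).
    pose proof (sum_list_drop L (u n) (u (S n)) j gap (hdec n) hj hdrop).
    specialize (IH ltac:(lia)). rewrite S_INR. lra. }
  pose proof (Hsum N (le_n N)). pose proof (sum_list_nonneg L (u N) (hnn N)).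
  pose proof (sum_list_le_length L (u 0%nat) B hB). lra.
Qed.

End SumList.

Fixpoint upstream {I : Type} (Ii : I -> list I) (n : nat) (i : I) : list I :=
  match n with
  | O => i :: nil
  | S m => upstream Ii m i ++ flat_map Ii (upstream Ii m i)
  end.

Section Upstream.
Variable I : Type.
Variable Ii : I -> list I.

Lemma dpath_in_upstream m j i : dpath Ii m j i -> In j (upstream Ii m i).
Proof.
  induction 1 as [i|n j k i hj _ IH]; simpl; [left; reflexivity|].
  apply in_or_app; right. apply in_flat_map. exists k; split; assumption.
Qed.

Lemma Nminus_in_upstream i n j : Nminus Ii i n j -> In j (upstream Ii n i).
Proof.
  intros (m & hm & hp). apply dpath_in_upstream in hp.
  induction hm as [|n hm IH]; [exact hp|]. simpl. apply in_or_app; left; exact IH.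
Qed.

Lemma upstream_length (M : R) i n : 0 <= M -> (forall k, INR (length (Ii k)) <= M) ->
  INR (length (upstream Ii n i)) <= (1 + M) ^ n.
Proof.
  intros hM HM.
  assert (flat : forall l, INR (length (flat_map Ii l)) <= M * INR (length l)).
  { induction l as [|k l IH]; cbn [flat_map length]; [simpl; lra|].
    rewrite length_app, plus_INR, S_INR. specialize (HM k). lra. }
  induction n as [|n IH]; [simpl; lra|]. cbn [upstream pow].
  rewrite length_app, plus_INR. pose proof (flat (upstream Ii n i)).
  pose proof (pos_INR (length (upstream Ii n i))). nra.
Qed.

End Upstream.

(** * Monotone operators *)

Section MonotoneOperator.
Variable I : Type.
Variable F : vec I -> vec I.
Hypothesis F_nonneg : forall s, vle vzero s -> vle vzero (F s).
Hypothesis F_le : forall s t, vle vzero s -> vle s t -> vle (F s) (F t).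

Lemma iter_nonneg n s : vle vzero s -> vle vzero (iter n F s).
Proof. intros hs; induction n; simpl; auto. Qed.

Lemma iter_le n s t : vle vzero s -> vle s t -> vle (iter n F s) (iter n F t).
Proof. intros hs h; induction n; simpl; auto using iter_nonneg. Qed.

Lemma iter_Psi_succ w n : Psi F w -> vle (iter (S n) F w) (iter n F w).
Proof.
  intros [[hw _] hFw]. induction n; [exact hFw|].
  apply F_le; [exact (iter_nonneg (S n) w hw)|exact IHn].
Qed.

Lemma iter_Psi_antitone w m n : Psi F w -> (m <= n)%nat -> vle (iter n F w) (iter m F w).
Proof.
  intros Pw hmn. induction hmn as [|k hk IH]; [apply vle_refl|].
  exact (vle_trans _ _ _ _ (iter_Psi_succ w k Pw) IH).
Qed.

Lemma iter_le_Psi s w n : Psi F w -> vle vzero s -> vle s w -> vle (iter n F s) w.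
Proof.
  intros Pw hs hsw. eapply vle_trans; [apply iter_le; eassumption|].
  apply (iter_Psi_antitone w 0 n Pw), Nat.le_0_l.
Qed.

Lemma Psi_iter w n : Psi F w -> Psi F (iter n F w).
Proof.
  intros Pw. split; [|apply (iter_Psi_succ w n Pw)].
  pose proof Pw as [hw _].
  apply (lp_le _ _ w); [apply iter_nonneg; exact (proj1 hw)| |exact hw].
  apply (iter_le_Psi w w n Pw (proj1 hw) (vle_refl I w)).
Qed.

Hypothesis F_cofinal : cofinal (Psi F).

Section Stability.
Hypothesis F_small_Psi : forall eps, 0 < eps ->
  exists c, 0 < c /\ exists w, Psi F w /\ vle (fun _ => c) w /\ vle w (fun _ => eps).

Lemma iter_le_classKinf : exists phi, classKinf phi /\ (forall r, continuity_pt phi r) /\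
  (forall r, 0 <= phi r) /\ forall s n i, lp s -> iter n F s i <= phi (real (nrm s)).
Proof.
  set (P r b := 0 <= b /\ forall s, lp s -> real (nrm s) <= r -> forall n i, iter n F s i <= b).
  destruct (classKinf_majorant P) as (phi & Kphi & cphi & nphi & Hphi).
  - intros r r' b b' [hb H] hr hbb'. split; [lra|].
    intros s hs hsr n i. specialize (H s hs ltac:(lra) n i). lra.
  - intros r b H. split.
    + apply Rle_plus_epsilon. intros e he. apply (H e he).
    + intros s hs hsr n i. apply Rle_plus_epsilon. intros e he. apply (H e he); assumption.
  - intros r b [hb _]; exact hb.
  - intros r. destruct (F_cofinal _ (lp_cst I (Rmax r 0) (Rmax_r r 0))) as (w & Pw & hw).
    exists (real (nrm w)). split; [apply nrm_nonneg|]. intros s hs hsr n i.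
    assert (hsw : vle s w).
    { apply (vle_trans _ _ _ _ (le_cst_of_nrm I s r hs hsr)). intros j. specialize (hw j).
      pose proof (Rmax_l r 0). simpl in hw. lra. }
    pose proof (iter_le_Psi s w n Pw (proj1 hs) hsw i).
    pose proof (lp_le_nrm I w i (proj1 Pw)). lra.
  - intros eps he. destruct (F_small_Psi eps he) as (c & hc & w & Pw & hcw & hweps).
    exists c. split; [exact hc|]. split; [lra|]. intros s hs hsc n i.
    apply (vle_trans _ _ _ _ (iter_le_Psi s w n Pw (proj1 hs)
             (vle_trans _ _ _ _ (le_cst_of_nrm I s c hs hsc) hcw)) hweps).
  - exists phi. split; [exact Kphi|split; [exact cphi|split; [exact nphi|]]].
    intros s n i hs. apply (Hphi (real (nrm s)) (nrm_nonneg I s)); [exact hs|apply Rle_refl].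
Qed.

Lemma UGS_of_small_Psi : UGS F.
Proof.
  destruct iter_le_classKinf as (phi & Kphi & _ & _ & Hphi).
  exists phi. split; [exact Kphi|]. intros s n hs. apply nrm_le. intros i.
  rewrite Rabs_right by (apply Rle_ge, (iter_nonneg n s (proj1 hs))). apply Hphi, hs.
Qed.

End Stability.

Section Attractivity.
Hypothesis F_decay : forall R0 eps, 0 < R0 -> 0 < eps -> exists N,
  forall w, Psi F w -> real (nrm w) <= R0 -> forall i, iter N F w i < eps.

Lemma uniformly_attractive R0 eps : 0 < R0 -> 0 < eps -> exists N,
  forall s n i, lp s -> real (nrm s) <= R0 -> (N <= n)%nat -> iter n F s i < eps.
Proof.
  intros hR he. destruct (F_cofinal _ (lp_cst I R0 (Rlt_le _ _ hR))) as (w & Pw & hw).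
  destruct (F_decay (Rmax 1 (real (nrm w))) eps) as [N HN].
  { pose proof (Rmax_l 1 (real (nrm w))). lra. }
  { exact he. }
  exists N. intros s n i hs hsR hn.
  pose proof (iter_le n s w (proj1 hs) (vle_trans _ _ _ _ (le_cst_of_nrm I s R0 hs hsR) hw) i).
  pose proof (iter_Psi_antitone w N n Pw hn i).
  pose proof (HN w Pw (Rmax_r _ _) i). lra.
Qed.

Hypothesis F_floor : forall c, 0 < c ->
  exists c', 0 < c' /\ forall s, vle (fun _ => c) s -> vle (fun _ => c') (F s).

Lemma iter_floor n c s : 0 < c -> vle (fun _ => c) s ->
  exists c', 0 < c' /\ vle (fun _ => c') (iter n F s).
Proof.
  intros hc hs. induction n as [|n IH]; [exists c; split; assumption|].
  destruct IH as (c1 & hc1 & H1). destruct (F_floor c1 hc1) as (c2 & hc2 & H2).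
  exists c2. split; [exact hc2|]. apply H2, H1.
Qed.

Lemma small_Psi eps : 0 < eps ->
  exists c, 0 < c /\ exists w, Psi F w /\ vle (fun _ => c) w /\ vle w (fun _ => eps).
Proof.
  intros he. destruct (F_cofinal _ (lp_cst I 1 Rle_0_1)) as (w1 & Pw1 & hw1).
  destruct (F_decay (Rmax 1 (real (nrm w1))) eps) as [N HN].
  { pose proof (Rmax_l 1 (real (nrm w1))). lra. }
  { exact he. }
  destruct (iter_floor N 1 w1 Rlt_0_1 hw1) as (c & hc & Hc).
  exists c. split; [exact hc|]. exists (iter N F w1).
  split; [apply Psi_iter, Pw1|split; [exact Hc|]].
  intros i. left. apply (HN w1 Pw1 (Rmax_r _ _)).
Qed.

Lemma iter_le_decay_weight phi : (forall r, 0 <= phi r) ->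
  (forall s n i, lp s -> iter n F s i <= phi (real (nrm s))) ->
  forall eps, 0 < eps -> exists N, forall s n i, lp s -> (N <= n)%nat ->
    iter n F s i <= eps * decay_weight phi (real (nrm s)).
Proof.
  intros nphi Hphi eps he.
  destruct (uniformly_attractive (/ eps) eps (Rinv_0_lt_compat eps he) he) as [N HN].
  exists N. intros s n i hs hn. pose proof (nrm_nonneg I s) as hr.
  set (r := real (nrm s)) in *.
  pose proof (decay_weight_ge phi r hr (nphi r)) as hW.
  destruct (Rle_dec r (/ eps)) as [h|h].
  - specialize (HN s n i hs h hn). pose proof (nphi r). nra.
  - specialize (Hphi s n i hs). fold r in Hphi.
    assert (1 <= eps * exp r).
    { pose proof (exp_ineq1_le r). apply Rnot_le_lt in h.
      apply (Rmult_lt_compat_l eps) in h; [|exact he]. rewrite Rinv_r in h by lra. nra. }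
    unfold decay_weight. pose proof (nphi r). nra.
Qed.

Lemma UGAS_of_decay : UGAS F.
Proof.
  destruct (iter_le_classKinf small_Psi) as (phi & Kphi & cphi & nphi & Hphi).
  set (Q x b := 0 <= b /\ forall s n i, lp s -> - x <= INR n ->
         iter n F s i <= b * decay_weight phi (real (nrm s))).
  assert (W_ge : forall s : vec I, lp s ->
            phi (real (nrm s)) + 1 <= decay_weight phi (real (nrm s)))
    by (intros s _; apply decay_weight_ge; [apply nrm_nonneg|apply nphi]).
  destruct (increasing_majorant_of_bounds Q) as (G & Gc & Gs & Gp & Gz & GQ).
  - intros x b b' [hb H] hbb'. split; [lra|]. intros s n i hs hn.
    specialize (H s n i hs hn). specialize (W_ge s hs). pose proof (nphi (real (nrm s))). nra.
  - intros x y b [hb H] hxy. split; [exact hb|]. intros s n i hs hn. apply H; [exact hs|lra].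
  - intros x b [hb _]; exact hb.
  - intros x. exists 1. split; [lra|]. intros s n i hs _.
    specialize (Hphi s n i hs). specialize (W_ge s hs). lra.
  - intros eps he. destruct (iter_le_decay_weight phi nphi Hphi eps he) as [N HN].
    exists (- INR N). split; [lra|]. intros s n i hs hn. apply HN; [exact hs|].
    apply INR_le. lra.
  - destruct (sqrt_weighted_classK phi (proj1 Kphi) cphi nphi) as [Kk ck].
    destruct (sqrt_reflect_classL G Gc Gs Gp Gz) as [Ll cl].
    (* From [x <= phi r] and [x <= G (- n) * decay_weight phi r], by a geometric mean. *)
    exists (fun r t => sqrt (phi r * decay_weight phi r) * sqrt (G (- t))).
    split; [apply classKL_mul; auto|]. intros s n hs. apply nrm_le. intros i.
    pose proof (iter_nonneg n s (proj1 hs) i) as hx. unfold vzero in hx.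
    rewrite Rabs_right by lra. specialize (W_ge s hs).
    apply le_sqrt_mul; [exact hx|left; apply Gp| |apply Hphi, hs|].
    { pose proof (nphi (real (nrm s))). lra. }
    apply (GQ (- INR n)); [exact hs|lra].
Qed.

End Attractivity.
End MonotoneOperator.

(** * Gain operators *)

Section GainOperator.
Variable I : Type.
Variable Ii : I -> list I.
Variable gam : I -> I -> R -> R.
Variable mu : I -> vec I -> Rbar.
Hypothesis Hgain : is_gain_data Ii gam mu.

Definition gain_vec (i : I) (s : vec I) : vec I :=
  restr (fun j => In j (Ii i)) (fun j => gam i j (s j)).

Lemma gam_classK i j : In j (Ii i) -> classK (gam i j).
Proof. intros h. exact (proj1 (proj1 (proj2 Hgain) i j h)). Qed.

Lemma gain_vec_outside i s j : ~ In j (Ii i) -> gain_vec i s j = 0.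
Proof.
  intros h. unfold gain_vec, restr.
  destruct excluded_middle_informative; [contradiction|reflexivity].
Qed.

Lemma gain_vec_nonneg i s : vle vzero s -> vle vzero (gain_vec i s).
Proof.
  intros hs j. unfold gain_vec, restr, vzero. destruct excluded_middle_informative as [h|h]; [|lra].
  apply (classK_nonneg _ (gam_classK i j h)), hs.
Qed.

Lemma gain_vec_le i s t : vle vzero s -> vle s t -> vle (gain_vec i s) (gain_vec i t).
Proof.
  intros hs hst j. unfold gain_vec, restr. destruct excluded_middle_informative as [h|h]; [|lra].
  apply (classK_le _ (gam_classK i j h)); [apply hs|apply hst].
Qed.

Lemma gain_vec_lp i s : vle vzero s -> lp (gain_vec i s).
Proof.
  intros hs. pose proof (gain_vec_nonneg i s hs) as hg. split; [exact hg|].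
  exists (sum_list (Ii i) (gain_vec i s)). intros j. rewrite Rabs_right by apply Rle_ge, hg.
  destruct (classic (In j (Ii i))) as [h|h].
  - apply le_sum_list; assumption.
  - rewrite gain_vec_outside by exact h. apply sum_list_nonneg, hg.
Qed.

Lemma mu_gain_vec i s : vle vzero s -> mu i (gain_vec i s) = Gam Ii gam mu s i.
Proof.
  intros hs. destruct Hgain as (_ & _ & _ & _ & _ & _ & HM3 & _).
  symmetry. apply (proj1 (HM3 i (Ii i))); [apply gain_vec_lp, hs|apply gain_vec_outside].
Qed.

Lemma Gam_nonneg s : vle vzero s -> vle vzero (Gam Ii gam mu s).
Proof.
  intros hs i. destruct Hgain as (_ & _ & _ & Hmu & _).
  pose proof (Hmu i _ (gain_vec_lp i s hs)) as h. rewrite mu_gain_vec in h by exact hs. exact h.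
Qed.

Lemma Gam_le s t : vle vzero s -> vle s t -> vle (Gam Ii gam mu s) (Gam Ii gam mu t).
Proof.
  intros hs hst i. destruct Hgain as (_ & _ & _ & _ & _ & HM2 & _).
  assert (ht : vle vzero t) by (intros j; specialize (hs j); specialize (hst j); lra).
  pose proof (HM2 i _ _ (gain_vec_lp i s hs) (gain_vec_lp i t ht) (gain_vec_le i s t hs hst)) as h.
  rewrite !mu_gain_vec in h by assumption. exact h.
Qed.

Lemma Gam_ge_classK : assumptionA Ii gam -> exists alpha, classK alpha /\
  forall s i j, vle vzero s -> In j (Ii i) -> alpha (s j) <= Gam Ii gam mu s i.
Proof.
  intros [(eta & Keta & Heta) _]. destruct Hgain as (_ & _ & _ & _ & (xi & Kxi & HM1) & _).
  exists (fun x => xi (eta x)). split; [apply classK_comp; [apply Kxi|apply Keta]|].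
  intros s i j hs hj. pose proof (proj2 (HM1 i) _ (gain_vec_lp i s hs)) as h.
  rewrite mu_gain_vec in h by exact hs. eapply Rle_trans; [|exact h].
  apply (classK_le _ (proj1 Kxi)); [apply (classK_nonneg _ (proj1 Keta)), hs|].
  eapply Rle_trans; [apply Heta; [exact hj|apply hs]|].
  replace (gam i j (s j)) with (gain_vec i s j)
    by (unfold gain_vec, restr; destruct excluded_middle_informative; [reflexivity|contradiction]).
  apply lp_le_nrm, gain_vec_lp, hs.
Qed.

Section Margin.
Variable r : R -> R.
Hypothesis Kr : classK r.

Lemma Gam_rho_nonneg s : vle vzero s -> vle vzero (Gam_rho Ii gam mu r s).
Proof.
  intros hs i. unfold Gam_rho, vzero. pose proof (Gam_nonneg s hs i) as h. unfold vzero in h.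
  pose proof (classK_nonneg r Kr _ h). lra.
Qed.

Lemma Gam_rho_le s t : vle vzero s -> vle s t ->
  vle (Gam_rho Ii gam mu r s) (Gam_rho Ii gam mu r t).
Proof.
  intros hs hst i. unfold Gam_rho. pose proof (Gam_nonneg s hs i) as h. unfold vzero in h.
  pose proof (Gam_le s t hs hst i) as hle. pose proof (classK_le r Kr _ _ h hle). lra.
Qed.

Lemma Gam_hat_nonneg s : vle vzero s -> vle vzero (Gam_hat Ii gam mu r s).
Proof.
  intros hs i. unfold Gam_hat, vmax. specialize (hs i).
  pose proof (Rmax_l (s i) (Gam_rho Ii gam mu r s i)). lra.
Qed.

Lemma Gam_hat_le s t : vle vzero s -> vle s t ->
  vle (Gam_hat Ii gam mu r s) (Gam_hat Ii gam mu r t).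
Proof.
  intros hs hst i. unfold Gam_hat, vmax. pose proof (Gam_rho_le s t hs hst i).
  apply Rmax_lub; [apply (Rle_trans _ (t i)); [apply hst|apply Rmax_l]|].
  eapply Rle_trans; [eassumption|apply Rmax_r].
Qed.

Lemma Gam_rho_floor : assumptionA Ii gam -> forall c, 0 < c -> exists c', 0 < c' /\
  forall s, vle (fun _ => c) s -> vle (fun _ => c') (Gam_rho Ii gam mu r s).
Proof.
  intros HA c hc. destruct (Gam_ge_classK HA) as (alpha & Kalpha & Halpha).
  exists (alpha c). split; [apply (classK_pos _ Kalpha), hc|]. intros s hs i.
  assert (s_nonneg : vle vzero s) by (intros j; specialize (hs j); unfold vzero; simpl in hs; lra).
  destruct (Ii i) as [|j l] eqn:E; [destruct HA as [_ Hne]; contradiction (Hne i)|].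
  assert (hj : In j (Ii i)) by (rewrite E; left; reflexivity).
  pose proof (Halpha s i j s_nonneg hj).
  pose proof (classK_le _ Kalpha c (s j) (Rlt_le _ _ hc) (hs j)).
  pose proof (Gam_rho_nonneg s s_nonneg i). unfold Gam_rho, vzero in *.
  pose proof (classK_nonneg r Kr (Gam Ii gam mu s i) (Gam_nonneg s s_nonneg i)). lra.
Qed.

End Margin.

Lemma Psi_Gam_rho_weaken r r' w : (forall x, 0 <= x -> r' x <= r x) ->
  Psi (Gam_rho Ii gam mu r) w -> Psi (Gam_rho Ii gam mu r') w.
Proof.
  intros hr [hw hTw]. split; [exact hw|]. intros i. specialize (hTw i). unfold Gam_rho in *.
  pose proof (hr _ (Gam_nonneg w (proj1 hw) i)). lra.
Qed.

Lemma Psi_Gam_hat r w : Psi (Gam_rho Ii gam mu r) w -> Psi (Gam_hat Ii gam mu r) w.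
Proof. intros [hw hTw]. split; [exact hw|]. intros i. apply Rmax_lub; [lra|apply hTw]. Qed.

Lemma Gam_rho_half_decay rho M : classKinf rho -> uniform_NJI Ii (Gam_rho Ii gam mu rho) ->
  0 <= M -> (forall i, INR (length (Ii i)) <= M) ->
  forall R0 eps, 0 < R0 -> 0 < eps -> exists N,
    forall w, Psi (Gam_rho Ii gam mu (fun x => rho x / 2)) w -> real (nrm w) <= R0 ->
    forall i, iter N (Gam_rho Ii gam mu (fun x => rho x / 2)) w i < eps.
Proof.
  intros Krho HNJI hM HM R0 eps hR he.
  set (T := Gam_rho Ii gam mu (fun x => rho x / 2)).
  assert (KT : classK (fun x => rho x / 2)) by (apply classKinf_div; [lra|exact Krho]).
  destruct (HNJI R0 eps hR he) as (n0 & del & hdel & Hjump).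
  destruct (classK_half_gap rho del (proj1 Krho) hdel) as (gap & hgap & Hgap).
  destruct (INR_unbounded ((1 + M) ^ n0 * R0 / gap)) as [N HN].
  exists N. intros w Pw hwR i.
  apply (sum_list_potential I (fun n => iter n T w) (upstream Ii n0 i) i R0 eps gap N).
  - intros n. apply (iter_nonneg I T (Gam_rho_nonneg _ KT)). exact (proj1 (proj1 Pw)).
  - intros n. apply (iter_Psi_succ I T (Gam_rho_nonneg _ KT) (Gam_rho_le _ KT) w n Pw).
  - intros j. pose proof (lp_le_nrm I w j (proj1 Pw)). simpl. lra.
  - intros n hn. set (v := iter n T w).
    pose proof (Psi_iter I T (Gam_rho_nonneg _ KT) (Gam_rho_le _ KT) w n Pw) as Pv. fold v in Pv.
    assert (hv : Rbar_le (nrm v) R0).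
    { apply nrm_le. intros j. rewrite Rabs_right by apply Rle_ge, (proj1 (proj1 Pv) j).
      pose proof (iter_Psi_antitone I T (Gam_rho_nonneg _ KT) (Gam_rho_le _ KT) w 0 n Pw
                    (Nat.le_0_l n) j) as hvw.
      pose proof (lp_le_nrm I w j (proj1 Pw)). simpl in hvw. fold v in hvw. lra. }
    destruct (Hjump v i (proj1 Pv) hn hv) as (j & hj & hdj & hTj).
    exists j. split; [apply (Nminus_in_upstream I Ii i n0 j hj)|].
    change (iter (S n) T w j) with (T v j). unfold T, Gam_rho. unfold Gam_rho in hTj.
    apply Hgap; [apply (Gam_nonneg v (proj1 (proj1 Pv)))|exact hdj|exact hTj].
  - pose proof (upstream_length I Ii M i n0 hM HM).
    pose proof (pos_INR (length (upstream Ii n0 i))).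
    assert (hNgap : (1 + M) ^ n0 * R0 < INR N * gap).
    { apply (Rmult_lt_compat_r gap) in HN; [|exact hgap].
      replace ((1 + M) ^ n0 * R0 / gap * gap) with ((1 + M) ^ n0 * R0) in HN by (field; lra). lra. }
    apply (Rle_lt_trans _ ((1 + M) ^ n0 * R0)); [apply Rmult_le_compat_r; lra|exact hNgap].
Qed.

End GainOperator.

Theorem corollary2p21 (I : Type) (Icount : exists f : I -> nat, forall a b, f a = f b -> a = b)
  (Inonempty : inhabited I)
  (Ii : I -> list I) (gam : I -> I -> R -> R) (mu : I -> vec I -> Rbar)
  (Hgain : is_gain_data Ii gam mu) (HA : assumptionA Ii gam)
  (rho : R -> R) (Hrho : classKinf rho)
  (Hcof : cofinal (Psi (Gam_rho Ii gam mu rho)))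
  (HNJI : uniform_NJI Ii (Gam_rho Ii gam mu rho))
  (HM : exists M, 0 < M /\ forall i, INR (length (Ii i)) <= M) :
  exists rho', classKinf rho' /\
    UGS (Gam_hat Ii gam mu rho') /\ UGAS (Gam_rho Ii gam mu rho').
Proof.
  destruct HM as (M & hM & HMb).
  set (rho' x := rho x / 2).
  assert (Krho' : classKinf rho') by (apply classKinf_div; [lra|exact Hrho]).
  pose proof (Gam_rho_nonneg I Ii gam mu Hgain rho' (proj1 Krho')) as T_nonneg.
  pose proof (Gam_rho_le I Ii gam mu Hgain rho' (proj1 Krho')) as T_le.
  assert (T_cofinal : cofinal (Psi (Gam_rho Ii gam mu rho'))).
  { intros s hs. destruct (Hcof s hs) as (w & Pw & hsw). exists w. split; [|exact hsw].
    apply (Psi_Gam_rho_weaken I Ii gam mu Hgain rho); [|exact Pw].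
    intros x hx. pose proof (classK_nonneg rho (proj1 Hrho) x hx). unfold rho'. lra. }
  pose proof (Gam_rho_half_decay I Ii gam mu Hgain rho M Hrho HNJI (Rlt_le _ _ hM) HMb) as T_decay.
  pose proof (Gam_rho_floor I Ii gam mu Hgain rho' (proj1 Krho') HA) as T_floor.
  exists rho'. split; [exact Krho'|split].
  - apply UGS_of_small_Psi.
    + apply Gam_hat_nonneg.
    + apply (Gam_hat_le I Ii gam mu Hgain rho' (proj1 Krho')).
    + intros s hs. destruct (T_cofinal s hs) as (w & Pw & hsw).
      exists w. split; [apply Psi_Gam_hat, Pw|exact hsw].
    + intros eps he.
      destruct (small_Psi I _ T_nonneg T_le T_cofinal T_decay T_floor eps he)
        as (c & hc & w & Pw & hw).
      exists c. split; [exact hc|]. exists w. split; [apply Psi_Gam_hat, Pw|exact hw].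
  - exact (UGAS_of_decay I _ T_nonneg T_le T_cofinal T_decay T_floor).
Qed.
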